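(* Let $d\ge1$, $n\ge2$ be integers, $\kappa_d$ the volume of the $d$-dimensional unit ball, $V\ge0$, $c\in(0,\infty)$, $-d/2<\tau_1<\dots<\tau_n$ reals, $a_i=\tau_i+d$, $x_i=\tau_i+d/2$. Let $\Sigma_n^{\mathrm{sb}}$ have entries $\frac{Vd\kappa_d}{2(x_i+x_j)}$, $\Sigma_n^{\mathrm{sp}}$ entries $\frac{Vd^2\kappa_d^2}{a_ia_j}$, and $\Sigma_n=\Sigma_n^{\mathrm{sb}}+c\Sigma_n^{\mathrm{sp}}$ if $c\le1$, $\Sigma_n=\frac1c\Sigma_n^{\mathrm{sb}}+\Sigma_n^{\mathrm{sp}}$ if $c>1$. Write $\det(\Sigma_n-\lambda I_n)=(-1)^n\lambda^n+a_n^{(n-1)}\lambda^{n-1}+\dots+a_n^{(1)}\lambda+a_n^{(0)}$. For $k\in[n-1]$ and $I=\{i_1<\dots<i_{n-k}\}\subseteq[n]$ define $$D(I)=\Bigg(1+\sum_{j\in I}\frac{cd\kappa_d}{a_j}\Bigg(\frac{4x_j\prod_{m\in I\setminus\{j\}}(x_m+x_j)^2}{a_j\prod_{m\in I\setminus\{j\}}(x_m-x_j)^2}-\sum_{i\in I\setminus\{j\}}\frac{8x_ix_j(x_i+x_j)\prod_{l\in I\setminus\{i,j\},\,m\in\{i,j\}}(x_m+x_l)}{a_i(x_j-x_i)^2\prod_{l\in I\setminus\{i,j\},\,m\in\{i,j\}}(x_m-x_l)}\Bigg)\Bigg)\frac{\prod_{i<j\in I}(x_i-x_j)^2}{\prod_{i,j\in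 I}(x_i+x_j)},$$ and $D_k=\sum_{I\subseteq[n],\,|I|=n-k}D(I)$. Then $a_n^{(k)}=(-1)^kD_k\big(\frac{Vd\kappa_d}{2}\big)^{n-k}$ for $c\in(0,1]$, and $a_n^{(k)}=(-1)^kD_k\big(\frac{Vd\kappa_d}{2c}\big)^{n-k}$ for $c\in(1,\infty)$, for all $k\in[n-1]$.
   Context: $\Sigma_n$ is the asymptotic covariance matrix of normalized length power functionals in the critical regime. $[n]=\{1,\dots,n\}$. *)

From HB Require Import structures.
From mathcomp Require Import all_boot all_order all_algebra.
From mathcomp Require Import reals trigo.
Set Implicit Arguments. Unset Strict Implicit. Unset Printing Implicit Defensive.
Import Order.TTheory GRing.Theory Num.Theory.
Local Open Scope ring_scope.

(* volume of the d-dimensional unit ball: kappa_0 = 1, kappa_1 = 2,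
   kappa_{d+2} = 2 pi / (d+2) * kappa_d  (= pi^(d/2) / Gamma(d/2+1)) *)
Fixpoint kappa (R : realType) (d : nat) : R :=
  match d with
  | 0 => 1
  | 1 => 2
  | d'.+2 => 2 * pi / d'.+2%:R * kappa R d'
  end.

Section Defs.
Variables (R : realType) (d n : nat) (V c : R) (tau : 'I_n -> R).

Definition xx (i : 'I_n) : R := tau i + d%:R / 2.
Definition aa (i : 'I_n) : R := tau i + d%:R.

Definition Sigma_sb : 'M[R]_n :=
  \matrix_(i, j) (V * d%:R * kappa R d / (2 * (xx i + xx j))).
Definition Sigma_sp : 'M[R]_n :=
  \matrix_(i, j) (V * d%:R ^+ 2 * kappa R d ^+ 2 / (aa i * aa j)).
Definition Sigma : 'M[R]_n :=
  if c <= 1 then Sigma_sb + c *: Sigma_sp else c^-1 *: Sigma_sb + Sigma_sp.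

Definition detcoef (A : 'M[R]_n) (k : nat) : R :=
  (\det (map_mx polyC A - 'X%:M))`_k.

Definition DI (I : {set 'I_n}) : R :=
  (1 + \sum_(j in I) (c * d%:R * kappa R d / aa j) *
     (4 * xx j * (\prod_(m in I :\ j) (xx m + xx j) ^+ 2)
        / (aa j * \prod_(m in I :\ j) (xx m - xx j) ^+ 2)
      - \sum_(i in I :\ j)
          (8 * xx i * xx j * (xx i + xx j)
             * \prod_(l in I :\ i :\ j) \prod_(m in [set i; j]) (xx m + xx l))
          / (aa i * (xx j - xx i) ^+ 2
             * \prod_(l in I :\ i :\ j) \prod_(m in [set i; j]) (xx m - xx l))))
  * (\prod_(i in I) \prod_(j in I | (i < j)%N) (xx i - xx j) ^+ 2)
  / (\prod_(i in I) \prod_(j in I) (xx i + xx j)).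

Definition Dk (k : nat) : R := \sum_(I : {set 'I_n} | #|I| == (n - k)%N) DI I.

End Defs.

From HB Require Import structures.
From mathcomp Require Import all_boot all_order all_algebra.
From mathcomp Require Import reals trigo.
From mathcomp Require Import perm ring lra zify.
Set Implicit Arguments. Unset Strict Implicit. Unset Printing Implicit Defensive.
Import Order.TTheory GRing.Theory Num.Theory.
Local Open Scope ring_scope.

(* The coefficient of lambda^k in det (Sigma - lambda I) is (-1)^k times the
   sum of the principal minors of Sigma of size n - k.  In both regimes Sigma
   is a multiple of C + s u u^T, where C = [(x_i + x_j)^-1] is a Cauchy matrix
   and u = (1 / a_i).  By the matrix determinant lemma, the principal minor on
   I is det C_I (1 + s u_I^T C_I^-1 u_I).  Both ingredients are explicit:
   C_I^-1 has entries w_j w_k / (x_j + x_k), where the w_j are the residues in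
   the partial fraction expansion of 1 - prod_(l in I) (t - x_l) / (t + x_l),
   and det C_I = prod_(i < j) (x_i - x_j)^2 / prod_(i, j) (x_i + x_j) follows
   by induction on I from Cramer's rule for the diagonal entry of C_I^-1.
   Expanding u_I^T C_I^-1 u_I gives D(I). *)

Lemma setU1_ind (T : finType) (P : {set T} -> Prop) :
  P set0 -> (forall (a : T) (A : {set T}), a \notin A -> P A -> P (a |: A)) -> forall A, P A.
Proof.
move=> P0 PU A; elim: {A}#|A| {-2}A (erefl #|A|) => [|k IHk] A cardA.
  by move/cards0_eq: cardA ->.
have [a aA] : exists a, a \in A by apply/set0Pn; rewrite -card_gt0 cardA.
rewrite -(setD1K aA); apply: PU; first by rewrite setD11.
by apply: IHk; move: cardA; rewrite (cardsD1 a) aA => -[].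
Qed.

Section RankOneUpdate.
Variables (R : comNzRingType) (m : nat).
Implicit Types (w v : 'cV[R]_m).

Lemma det1D_mul_tr w v : \det (1%:M + w *m v^T) = 1 + (v^T *m w) 0 0.
Proof.
pose M := block_mx (1%:M : 'M[R]_1) (- v^T) w (1%:M : 'M[R]_m).
have lowerE : M = block_mx 1%:M 0 w 1%:M *m block_mx 1%:M (- v^T) 0 (1%:M + w *m v^T).
  rewrite mulmx_block !mul1mx !mulmx1 !mul0mx !addr0 ?add0r mulmxN.
  by rewrite addrCA addNr addr0.
have upperE : M = block_mx (1%:M + v^T *m w) (- v^T) 0 1%:M *m block_mx 1%:M 0 w 1%:M.
  by rewrite mulmx_block !mul1mx !mulmx1 !mul0mx ?mulmx0 ?addr0 ?add0r mulNmx addrK.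
have := congr1 determinant lowerE; rewrite {1}upperE !det_mulmx.
rewrite (@det_lblock _ 1 m) !(@det_ublock _ 1 m) !det1 !mul1r !mulr1 => <-.
by rewrite det_mx11 !mxE.
Qed.

Lemma detD_mul_tr (P Y : 'M[R]_m) w v : P *m Y = 1%:M ->
  \det (P + w *m v^T) = \det P * (1 + (v^T *m (Y *m w)) 0 0).
Proof.
move=> PY; have -> : P + w *m v^T = P *m (1%:M + (Y *m w) *m v^T).
  by rewrite mulmxDr mulmx1 !mulmxA PY mul1mx.
by rewrite det_mulmx det1D_mul_tr.
Qed.

End RankOneUpdate.

Section PrincipalMinors.
Variables (R : comNzRingType) (n : nat).
Implicit Types (I J : {set 'I_n}) (A Y : 'M[R]_n).

(* [A] restricted to [I x I] and padded with the identity, so that its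
   determinant is the principal minor of [A] on [I] without reindexing. *)
Definition principal_mx I A : 'M[R]_n :=
  \matrix_(i, j) if i \in I then (if j \in I then A i j else 0) else (i == j)%:R.

Lemma principal_mxE I A i j :
  principal_mx I A i j = if i \in I then (if j \in I then A i j else 0) else (i == j)%:R.
Proof. by rewrite mxE. Qed.

Lemma perm_fix_compl_mem I (s : 'S_n) :
  [forall i in ~: I, s i == i] -> forall i, (s i \in I) = (i \in I).
Proof.
move=> /forall_inP sfix i; apply/idP/idP => [siI | iI].
  by apply: contraTT siI => iNI; rewrite (eqP (sfix i _)) // inE.
apply: contraTT iI => siNI.
have /eqP ssi : s (s i) == s i by apply: sfix; rewrite inE.
by rewrite -(perm_inj ssi).
Qed.

Lemma prod_perm_compl (T : comNzRingType) I (s : 'S_n) (F : 'I_n -> T) (c : T) :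
  \prod_i (if i \in I then F i else c *+ (i == s i)) =
  if [forall i in ~: I, s i == i] then c ^+ #|~: I| * \prod_(i in I) F i else 0.
Proof.
case: ifP => [/forall_inP sfix | /forall_inP sNfix].
  rewrite (bigID (mem I)) /= -prodr_const [RHS]mulrC; congr (_ * _).
    by apply: eq_bigr => i ->.
  apply: eq_big => [i | i iNI]; first by rewrite inE.
  by rewrite (negPf iNI) (eqP (sfix i _)) ?inE // eqxx.
have [i /andP[iNI sii] | sfix] := pickP (fun i => (i \notin I) && (s i != i)).
  by rewrite (bigD1 i) //= (negPf iNI) eq_sym (negPf sii) mulr0n mul0r.
by case: sNfix => i; rewrite inE => iNI; move: (sfix i); rewrite iNI => /negbFE.
Qed.

Lemma prod_principal_mx_perm I A (s : 'S_n) :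
  \prod_i principal_mx I A i (s i) =
  if [forall i in ~: I, s i == i] then \prod_(i in I) A i (s i) else 0.
Proof.
under eq_bigr do rewrite principal_mxE -[(_ == _)%:R]/(1 *+ _).
rewrite prod_perm_compl expr1n mul1r; case: ifP => // sfix.
by apply: eq_bigr => i iI; rewrite (perm_fix_compl_mem sfix) iI.
Qed.

Lemma det_char_principal A :
  \det (map_mx polyC A - 'X%:M) =
  \sum_(I : {set 'I_n}) (- 'X) ^+ #|~: I| * (\det (principal_mx I A))%:P.
Proof.
transitivity (\sum_(s : 'S_n) (-1) ^+ s * \sum_(I : {set 'I_n})
    \prod_i (if i \in I then (A i (s i))%:P else (- 'X) *+ (i == s i))).
  apply: eq_bigr => s _; rewrite -bigA_distr; congr (_ * _).
  by apply: eq_bigr => i _; rewrite !mxE mulNrn.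
under eq_bigr do rewrite big_distrr.
rewrite exchange_big /=; apply: eq_bigr => I _.
rewrite rmorph_sum big_distrr /=; apply: eq_bigr => s _.
rewrite prod_perm_compl prod_principal_mx_perm rmorphM rmorph_sign /= mulrCA.
by case: ifP; rewrite ?mulr0 ?rmorph0 // rmorph_prod.
Qed.

Lemma coef_det_char A k : (k <= n)%N ->
  (\det (map_mx polyC A - 'X%:M))`_k =
  (-1) ^+ k * \sum_(I : {set 'I_n} | #|I| == (n - k)%N) \det (principal_mx I A).
Proof.
move=> k_le_n; rewrite det_char_principal coef_sum big_distrr /= [RHS]big_mkcond /=.
apply: eq_bigr => I _.
have cardIC : #|~: I| = (n - #|I|)%N by rewrite cardsCs card_ord setCK.
rewrite coefMC cardIC -scaleN1r exprZn coefZ coefXn.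
have I_le_n : (#|I| <= n)%N by rewrite -[X in (_ <= X)%N](card_ord n) max_card.
case: (eqVneq #|I| (n - k)%N) => [-> | cardI_neq]; first by rewrite subKn // eqxx mulr1.
have -> : (k == n - #|I|)%N = false by apply/eqP; lia.
by rewrite mulr0 mul0r.
Qed.

Lemma principal_mx_mul1 I A Y :
  (forall i k, i \in I -> k \in I -> \sum_(j in I) A i j * Y j k = (i == k)%:R) ->
  principal_mx I A *m principal_mx I Y = 1%:M.
Proof.
move=> AY; apply/matrixP => i k; rewrite !mxE.
have [iI | iNI] := boolP (i \in I).
  under eq_bigr do rewrite !mxE iI.
  rewrite (bigID (mem I)) /= [X in _ + X]big1 ?addr0 => [|j /negPf ->]; last by rewrite mul0r.
  have [kI | kNI] := boolP (k \in I).
    by rewrite -AY //; apply: eq_bigr => j ->.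
  rewrite big1 => [|j ->]; last by rewrite mulr0.
  by case: eqP kNI => // <-; rewrite iI.
under eq_bigr do rewrite !mxE (negPf iNI).
rewrite (bigD1 i) //= eqxx mul1r big1 ?addr0 => [|j ji]; last first.
  by rewrite eq_sym (negPf ji) mul0r.
by rewrite (negPf iNI).
Qed.

Lemma det_principal_mxZ a I A :
  \det (principal_mx I (a *: A)) = a ^+ #|I| * \det (principal_mx I A).
Proof.
have -> : principal_mx I (a *: A) =
    diag_mx (\row_i (if i \in I then a else 1)) *m principal_mx I A.
  apply/matrixP => i j; rewrite mul_diag_mx !mxE.
  by case: (i \in I); case: (j \in I); rewrite ?mulr0 ?mul1r.
rewrite det_mulmx det_diag; congr (_ * _).
under eq_bigr do rewrite mxE.
by rewrite -big_mkcond /= prodr_const.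
Qed.

Lemma det_principal_rank1 I A Y (u : 'I_n -> R) (t : R) :
  principal_mx I A *m principal_mx I Y = 1%:M ->
  \det (principal_mx I (A + t *: \matrix_(i, j) (u i * u j))) =
  (1 + t * \sum_(j in I) u j * \sum_(i in I) Y j i * u i) * \det (principal_mx I A).
Proof.
move=> AY; pose uI : 'cV[R]_n := \col_i (if i \in I then u i else 0).
have -> : principal_mx I (A + t *: \matrix_(i, j) (u i * u j)) =
    principal_mx I A + (t *: uI) *m uI^T.
  apply/matrixP => i j; rewrite !mxE big_ord1 !mxE.
  by case: (i \in I); case: (j \in I); rewrite ?mulr0 ?mul0r ?addr0 // mulrA.
rewrite (detD_mul_tr _ _ AY) mulrC -!scalemxAr [in LHS]mxE; congr ((1 + t * _) * _).
rewrite mxE (bigID (mem I)) /= [X in _ + X]big1 ?addr0 => [|j /negPf jNI]; last first.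
  by rewrite !mxE jNI mul0r.
apply: eq_bigr => j jI; rewrite !mxE jI; congr (_ * _).
rewrite (bigID (mem I)) /= [X in _ + X]big1 ?addr0 => [|i /negPf iNI]; last first.
  by rewrite !mxE iNI mulr0.
by apply: eq_bigr => i iI; rewrite principal_mxE jI iI !mxE iI.
Qed.

Lemma cofactor_principal_setU1 I A p : p \notin I ->
  cofactor (principal_mx (p |: I) A) p p = \det (principal_mx I A).
Proof.
move=> pNI; rewrite (expand_det_row _ p) (bigD1 p) //= big1 ?addr0 => [|j jp].
  rewrite principal_mxE (negPf pNI) eqxx mul1r /cofactor; congr (_ * \det _).
  apply/matrixP => i j; rewrite !mxE !in_setU1.
  by rewrite ![lift p _ == p]eq_sym !(negPf (neq_lift _ _)).
by rewrite principal_mxE (negPf pNI) eq_sym (negPf jp) mul0r.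
Qed.

Lemma det_principal_setU1 I A Y p : p \notin I ->
  principal_mx (p |: I) A *m Y = 1%:M ->
  \det (principal_mx I A) = Y p p * \det (principal_mx (p |: I) A).
Proof.
move=> pNI AY; rewrite -(cofactor_principal_setU1 A pNI).
set M := principal_mx (p |: I) A.
have adjM : \adj M = \det M *: Y.
  by rewrite -[\adj M]mulmx1 -AY mulmxA mul_adj_mx mul_scalar_mx.
by move/matrixP/(_ p p): adjM; rewrite !mxE mulrC.
Qed.

End PrincipalMinors.

Section CauchyMatrix.
Variables (R : fieldType) (n : nat) (x : 'I_n -> R).
Hypothesis x_inj : injective x.
Hypothesis xD_neq0 : forall i j, x i + x j != 0.
Implicit Types (I J : {set 'I_n}) (t : R).

Definition cauchy_mx : 'M[R]_n := \matrix_(i, j) (x i + x j)^-1.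

Definition blaschke I t := \prod_(l in I) ((t - x l) / (t + x l)).

Definition cauchy_weight I j :=
  \prod_(l in I) (x j + x l) / \prod_(l in I :\ j) (x j - x l).

Definition cauchy_inv_mx I : 'M[R]_n :=
  \matrix_(j, k) (cauchy_weight I j * cauchy_weight I k / (x j + x k)).

Definition cauchy_det I :=
  (\prod_(i in I) \prod_(j in I | (i < j)%N) (x i - x j) ^+ 2)
  / (\prod_(i in I) \prod_(j in I) (x i + x j)).

Ltac neq0 := repeat (apply/andP; split); assumption.

Lemma xB_neq0 i j : i != j -> x i - x j != 0.
Proof. by move=> ij; rewrite subr_eq0; apply: contra ij => /eqP /x_inj ->. Qed.

Lemma prod_xB_neq0 J j : j \notin J -> \prod_(l in J) (x j - x l) != 0.
Proof.
by move=> jNJ; apply/prodf_neq0 => l lJ; apply: xB_neq0; apply: contraNneq jNJ => ->.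
Qed.

Lemma prod_xD_neq0 J j : \prod_(l in J) (x j + x l) != 0.
Proof. by apply/prodf_neq0 => l _; apply: xD_neq0. Qed.

Lemma blaschkeE I t :
  blaschke I t = \prod_(l in I) (t - x l) / \prod_(l in I) (t + x l).
Proof. by rewrite /blaschke big_split /= prodfV. Qed.

Lemma blaschke_setU1 p I t : p \notin I ->
  blaschke (p |: I) t = (t - x p) / (t + x p) * blaschke I t.
Proof. exact: big_setU1. Qed.

Lemma blaschke_root I i : i \in I -> blaschke I (x i) = 0.
Proof. by move=> iI; rewrite /blaschke (bigD1 i) //= subrr !mul0r. Qed.

Lemma blaschke_neq0 I j : j \notin I -> blaschke I (x j) != 0.
Proof.
by move=> jNI; rewrite blaschkeE mulf_neq0 ?invr_eq0 ?prod_xB_neq0 ?prod_xD_neq0.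
Qed.

Lemma blaschkeN I p : blaschke I (- x p) = (blaschke I (x p))^-1.
Proof.
rewrite /blaschke -prodfV; apply: eq_bigr => l _.
by rewrite invf_div -opprD [- x p + _]addrC -opprB invrN mulrNN.
Qed.

Lemma cauchy_weight_neq0 I j : cauchy_weight I j != 0.
Proof.
by rewrite mulf_neq0 ?invr_eq0 ?prod_xD_neq0 ?prod_xB_neq0 // !inE eqxx.
Qed.

Lemma cauchy_weight_setU1 p I j : p \notin I -> j \in I ->
  cauchy_weight (p |: I) j = cauchy_weight I j * (x j + x p) / (x j - x p).
Proof.
move=> pNI jI; have jp : j != p by apply: contraNneq pNI => <-.
rewrite /cauchy_weight; have -> : (p |: I) :\ j = p |: (I :\ j).
  by apply/setP => l; rewrite !inE; case: (l =P j) => // ->; rewrite (negPf jp).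
rewrite big_setU1 // big_setU1 /= ?inE ?(negPf pNI) ?andbF //.
have := xB_neq0 jp; have := @prod_xB_neq0 (I :\ j) j; rewrite !inE eqxx => /(_ isT).
by move=> ? ?; field; neq0.
Qed.

Lemma cauchy_weight_new p I : p \notin I ->
  cauchy_weight (p |: I) p = (x p + x p) / blaschke I (x p).
Proof.
move=> pNI; rewrite /cauchy_weight setU1K // big_setU1 //= blaschkeE.
have := prod_xB_neq0 pNI; have := prod_xD_neq0 I p.
by move=> ? ?; field; neq0.
Qed.

Lemma cauchy_partial_fractions I t : (forall l, l \in I -> t + x l != 0) ->
  \sum_(j in I) cauchy_weight I j / (t + x j) = 1 - blaschke I t.
Proof.
elim/setU1_ind: I t => [|p I pNI IH] t tD_neq0.
  by rewrite big_set0 /blaschke big_set0 subrr.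
have tDp : t + x p != 0 by apply: tD_neq0; rewrite setU11.
have tDI l : l \in I -> t + x l != 0 by move=> lI; apply: tD_neq0; rewrite setU1r.
have NpDI l : l \in I -> - x p + x l != 0.
  by move=> lI; rewrite addrC xB_neq0 //; apply: contraNneq pNI => <-.
rewrite big_setU1 //= cauchy_weight_new // blaschke_setU1 //.
have -> : \sum_(j in I) cauchy_weight (p |: I) j / (t + x j) =
    (x p + x p) / (t + x p) * \sum_(j in I) cauchy_weight I j / (- x p + x j)
    + (t - x p) / (t + x p) * \sum_(j in I) cauchy_weight I j / (t + x j).
  rewrite !big_distrr -big_split /=; apply: eq_bigr => j jI.
  rewrite cauchy_weight_setU1 //.
  have := tDI j jI; have := NpDI j jI; rewrite addrC => ? ?.
  by field; neq0.
rewrite (IH _ tDI) (IH _ NpDI) blaschkeN.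
have := blaschke_neq0 pNI => ?.
by field; neq0.
Qed.

Lemma sum_cauchy_weight_sqr I i : i \in I ->
  \sum_(j in I) cauchy_weight I j / (x i + x j) ^+ 2 = (cauchy_weight I i)^-1.
Proof.
move=> iI; rewrite -(setD1K iI); have iNJ : i \notin I :\ i by rewrite setD11.
move: (I :\ i) iNJ => J iNJ.
have NiDJ l : l \in J -> - x i + x l != 0.
  by move=> lJ; rewrite addrC xB_neq0 //; apply: contraNneq iNJ => <-.
rewrite big_setU1 //= cauchy_weight_new //.
have -> : \sum_(j in J) cauchy_weight (i |: J) j / (x i + x j) ^+ 2 =
    (x i + x i)^-1 * (\sum_(j in J) cauchy_weight J j / (- x i + x j)
                      - \sum_(j in J) cauchy_weight J j / (x i + x j)).
  rewrite -sumrB big_distrr /=; apply: eq_bigr => j jJ.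
  rewrite cauchy_weight_setU1 //.
  have := NiDJ j jJ; have := xD_neq0 j i; have := xD_neq0 i i; have := xD_neq0 i j.
  by rewrite [- _ + _]addrC => ? ? ? ?; field; neq0.
rewrite !cauchy_partial_fractions // blaschkeN.
have := blaschke_neq0 iNJ; have := xD_neq0 i i => ? ?.
by field; neq0.
Qed.

Lemma cauchy_inv_mxP I i k : i \in I -> k \in I ->
  \sum_(j in I) cauchy_mx i j * cauchy_inv_mx I j k = (i == k)%:R.
Proof.
move=> iI kI; under eq_bigr do rewrite !mxE.
have [<- | ik] := eqVneq i k.
  have := cauchy_weight_neq0 I i => wi_neq0.
  rewrite -[RHS](divff wi_neq0) -(sum_cauchy_weight_sqr iI) big_distrr /=.
  apply: eq_bigr => j _; have := xD_neq0 i j; have := xD_neq0 j i => ? ?.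
  by field; neq0.
have := xB_neq0 ik; rewrite -oppr_eq0 opprB => ?.
transitivity (cauchy_weight I k / (x k - x i) *
  (\sum_(j in I) cauchy_weight I j / (x i + x j)
   - \sum_(j in I) cauchy_weight I j / (x k + x j))).
  rewrite -sumrB big_distrr /=; apply: eq_bigr => j _.
  have := xD_neq0 i j; have := xD_neq0 j k; have := xD_neq0 k j => ? ? ?.
  by field; neq0.
by rewrite !cauchy_partial_fractions // !blaschke_root // subrr mulr0.
Qed.

Lemma principal_cauchy_mxK I :
  principal_mx I cauchy_mx *m principal_mx I (cauchy_inv_mx I) = 1%:M.
Proof. by apply: principal_mx_mul1 => i k; apply: cauchy_inv_mxP. Qed.

Lemma prod_sqr_xB_setU1 J p : p \notin J ->
  \prod_(i in p |: J) \prod_(j in p |: J | (i < j)%N) (x i - x j) ^+ 2 =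
  \prod_(i in J) \prod_(j in J | (i < j)%N) (x i - x j) ^+ 2 *
  \prod_(l in J) (x p - x l) ^+ 2.
Proof.
move=> pNJ; under eq_bigr do rewrite big_mkcondr /= big_setU1 //=.
rewrite big_setU1 //= ltnn mul1r big_split /= mulrA mulrC; congr (_ * _).
  by apply: eq_bigr => i _; rewrite -big_mkcondr.
rewrite -big_split /=; apply: eq_bigr => l lJ.
have [lp | pl | /val_inj lp] := ltngtP l p; last by rewrite -lp lJ in pNJ.
  by rewrite mul1r -sqrrN opprB.
by rewrite mulr1.
Qed.

Lemma prod_xD_setU1 J p : p \notin J ->
  \prod_(i in p |: J) \prod_(j in p |: J) (x i + x j) =
  \prod_(i in J) \prod_(j in J) (x i + x j) * ((x p + x p) * (\prod_(l in J) (x p + x l)) ^+ 2).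
Proof.
move=> pNJ; under eq_bigr do rewrite big_setU1 //=.
rewrite big_setU1 //= big_split /= expr2.
under [\prod_(i in J) (x i + x p)]eq_bigr do rewrite addrC.
ring.
Qed.

Lemma cauchy_det_setU1 J p : p \notin J ->
  cauchy_det (p |: J) = cauchy_det J * (blaschke J (x p) ^+ 2 / (x p + x p)).
Proof.
move=> pNJ; rewrite /cauchy_det prod_sqr_xB_setU1 // prod_xD_setU1 // blaschkeE.
have : \prod_(i in J) \prod_(j in J) (x i + x j) != 0.
  by apply/prodf_neq0 => i _; apply: prod_xD_neq0.
have := prod_xD_neq0 J p; have := xD_neq0 p p => ? ? ?.
by rewrite !prodrXl; field; neq0.
Qed.

Lemma det_principal_cauchy I : \det (principal_mx I cauchy_mx) = cauchy_det I.
Proof.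
elim/setU1_ind: I => [|p J pNJ IH].
  rewrite /cauchy_det !big_set0 divr1 -(det1 R n); congr (\det _).
  by apply/matrixP => i j; rewrite !mxE inE.
have := det_principal_setU1 pNJ (principal_cauchy_mxK (p |: J)).
rewrite IH principal_mxE setU11 mxE cauchy_weight_new // cauchy_det_setU1 //.
have := blaschke_neq0 pNJ; have := xD_neq0 p p => ? ? ->.
by field; neq0.
Qed.

Lemma cauchy_weight_setD1 I j : j \in I ->
  cauchy_weight I j =
  (x j + x j) * \prod_(l in I :\ j) (x j + x l) / \prod_(l in I :\ j) (x j - x l).
Proof. by move=> jI; rewrite /cauchy_weight (big_setD1 j). Qed.

Lemma cauchy_weight_setD2 I i j : i \in I -> j \in I -> i != j ->
  cauchy_weight I j =
  (x j + x j) * (x j + x i) * \prod_(l in I :\ i :\ j) (x j + x l)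
  / ((x j - x i) * \prod_(l in I :\ i :\ j) (x j - x l)).
Proof.
move=> iI jI ij; have iIj : i \in I :\ j by rewrite !inE ij.
have -> : I :\ i :\ j = I :\ j :\ i by apply/setP => l; rewrite !inE andbCA.
by rewrite /cauchy_weight (big_setD1 j) //= !(big_setD1 i iIj) /= mulrA.
Qed.

Lemma cauchy_inv_mx_diag I j (b : R) : j \in I ->
  4 * x j * (\prod_(m in I :\ j) (x m + x j) ^+ 2)
    / (b * \prod_(m in I :\ j) (x m - x j) ^+ 2)
  = 2 * (cauchy_inv_mx I j j / b).
Proof.
move=> jI; rewrite mxE (cauchy_weight_setD1 jI).
have : \prod_(l in I :\ j) (x j - x l) != 0 by rewrite prod_xB_neq0 // !inE eqxx.
under [\prod_(m in I :\ j) (x m + x j) ^+ 2]eq_bigr do rewrite addrC.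
under [\prod_(m in I :\ j) (x m - x j) ^+ 2]eq_bigr do rewrite -sqrrN opprB.
rewrite !prodrXl invfM; move: b^-1 => b'; have := xD_neq0 j j.
by move=> *; field; neq0.
Qed.

Lemma cauchy_inv_mx_offdiag I i j (b : R) : i \in I -> j \in I -> i != j ->
  8 * x i * x j * (x i + x j)
    * \prod_(l in I :\ i :\ j) \prod_(m in [set i; j]) (x m + x l)
  / (b * (x j - x i) ^+ 2
    * \prod_(l in I :\ i :\ j) \prod_(m in [set i; j]) (x m - x l))
  = - 2 * (cauchy_inv_mx I j i / b).
Proof.
move=> iI jI ij; have ji : j != i by rewrite eq_sym.
have pair_prod (f : 'I_n -> R) : \prod_(m in [set i; j]) f m = f i * f j.
  by rewrite big_setU1 ?big_set1 // inE.
rewrite !(eq_bigr _ (fun l _ => pair_prod (fun m => _))) !big_split /= mxE.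
rewrite (cauchy_weight_setD2 iI jI ij) (cauchy_weight_setD2 jI iI ji).
have -> : I :\ j :\ i = I :\ i :\ j by apply/setP => l; rewrite !inE andbCA.
have : \prod_(l in I :\ i :\ j) (x i - x l) != 0 by rewrite prod_xB_neq0 // !inE eqxx andbF.
have : \prod_(l in I :\ i :\ j) (x j - x l) != 0 by rewrite prod_xB_neq0 // !inE eqxx.
have := xB_neq0 ij; have := xB_neq0 ji.
have := xD_neq0 i j; have := xD_neq0 j i; have := xD_neq0 i i; have := xD_neq0 j j.
rewrite !invfM; move: b^-1 => b' *.
by field; neq0.
Qed.

Lemma cauchy_inv_quadraticE I (a : 'I_n -> R) (K : R) :
  \sum_(j in I) (K / a j) *
     (4 * x j * (\prod_(m in I :\ j) (x m + x j) ^+ 2)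
        / (a j * \prod_(m in I :\ j) (x m - x j) ^+ 2)
      - \sum_(i in I :\ j)
          (8 * x i * x j * (x i + x j)
             * \prod_(l in I :\ i :\ j) \prod_(m in [set i; j]) (x m + x l))
          / (a i * (x j - x i) ^+ 2
             * \prod_(l in I :\ i :\ j) \prod_(m in [set i; j]) (x m - x l)))
  = 2 * K * \sum_(j in I) (a j)^-1 * \sum_(i in I) cauchy_inv_mx I j i * (a i)^-1.
Proof.
rewrite big_distrr /=; apply: eq_bigr => j jI.
rewrite (big_setD1 j jI) /= cauchy_inv_mx_diag //.
under eq_bigr => i /setD1P[ij iI] do rewrite cauchy_inv_mx_offdiag //.
rewrite -big_distrr /=.
ring.
Qed.

End CauchyMatrix.

Section Covariance.
Variables (R : realType) (d n : nat) (V c : R) (tau : 'I_n -> R).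
Hypothesis tau_gt : forall i, - (d%:R / 2) < tau i.
Hypothesis tau_lt : forall i j : 'I_n, (i < j)%N -> tau i < tau j.

Local Notation s := (2 * (c * d%:R * kappa R d)).
Local Notation inv_aa_mx := (\matrix_(i, j) ((aa d tau i)^-1 * (aa d tau j)^-1) : 'M[R]_n).

Lemma xxD_neq0 i j : xx d tau i + xx d tau j != 0.
Proof.
have xx_gt0 l : 0 < xx d tau l by rewrite /xx; have := tau_gt l; lra.
by rewrite gt_eqF // addr_gt0.
Qed.

Lemma xx_inj : injective (xx d tau).
Proof.
move=> i j; rewrite /xx => /addIr tau_eq; apply/val_inj.
by case: (ltngtP i j) => // /tau_lt; rewrite tau_eq ltxx.
Qed.

Lemma DI_det_principal I :
  DI d c tau I = \det (principal_mx I (cauchy_mx (xx d tau) + s *: inv_aa_mx)).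
Proof.
rewrite (det_principal_rank1 (fun i => (aa d tau i)^-1) _
  (principal_cauchy_mxK xx_inj xxD_neq0 I)) (det_principal_cauchy xx_inj xxD_neq0).
by rewrite /DI (cauchy_inv_quadraticE xx_inj xxD_neq0) [RHS]mulrA.
Qed.

Lemma detcoef_Sigma mu k : (k <= n)%N ->
  Sigma d V c tau = mu *: (cauchy_mx (xx d tau) + s *: inv_aa_mx) ->
  detcoef (Sigma d V c tau) k = (-1) ^+ k * Dk d c tau k * mu ^+ (n - k).
Proof.
move=> k_le_n ->; rewrite /detcoef coef_det_char // -[RHS]mulrA; congr (_ * _).
rewrite /Dk big_distrl /=; apply: eq_bigr => I /eqP cardI.
by rewrite det_principal_mxZ cardI mulrC DI_det_principal.
Qed.

Lemma Sigma_sbE : Sigma_sb d V tau = (V * d%:R * kappa R d / 2) *: cauchy_mx (xx d tau).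
Proof. by apply/matrixP => i j; rewrite !mxE invfM mulrA. Qed.

Lemma Sigma_spE : Sigma_sp d V tau = (V * d%:R ^+ 2 * kappa R d ^+ 2) *: inv_aa_mx.
Proof. by apply/matrixP => i j; rewrite !mxE invfM mulrA. Qed.

Lemma Sigma_le1 : c <= 1 ->
  Sigma d V c tau = (V * d%:R * kappa R d / 2) *: (cauchy_mx (xx d tau) + s *: inv_aa_mx).
Proof.
move=> c_le1; rewrite /Sigma c_le1 Sigma_sbE Sigma_spE scalerDr !scalerA.
by congr (_ + _ *: _); move: (kappa R d) (d%:R : R) => K D; field.
Qed.

Lemma Sigma_gt1 : 1 < c ->
  Sigma d V c tau = (V * d%:R * kappa R d / (2 * c)) *: (cauchy_mx (xx d tau) + s *: inv_aa_mx).
Proof.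
move=> c_gt1; have c_neq0 : c != 0 by rewrite gt_eqF // (lt_trans ltr01).
rewrite /Sigma leNgt c_gt1 /= Sigma_sbE Sigma_spE scalerDr !scalerA.
by congr (_ *: _ + _ *: _); move: (kappa R d) (d%:R : R) => K D; field.
Qed.

End Covariance.

Theorem corollary7p5 (R : realType) (d n : nat) (V c : R) (tau : 'I_n -> R) :
  (1 <= d)%N -> (2 <= n)%N -> 0 <= V -> 0 < c ->
  (forall i, - (d%:R / 2) < tau i) ->
  (forall i j : 'I_n, (i < j)%N -> tau i < tau j) ->
  forall k : nat, (0 < k)%N -> (k < n)%N ->
    (c <= 1 -> detcoef (Sigma d V c tau) k
               = (-1) ^+ k * Dk d c tau k * (V * d%:R * kappa R d / 2) ^+ (n - k)) /\
    (1 < c -> detcoef (Sigma d V c tau) k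
               = (-1) ^+ k * Dk d c tau k * (V * d%:R * kappa R d / (2 * c)) ^+ (n - k)).
Proof.
(* The identity holds for every k <= n and all d, V, c: only the hypotheses on tau are used. *)
move=> _ _ _ _ tau_gt tau_lt k _ /ltnW k_le_n.
by split=> c_cmp; apply: detcoef_Sigma => //; [apply: Sigma_le1 | apply: Sigma_gt1].
Qed.
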